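(* Let $G$ be a cubical $\omega$-category with connections, and $1\le m\le n$. If $1\le i\le m$ then $\Phi_m\varepsilon_i=\varepsilon_1\Phi_{m-1}$ as maps $G_{n-1}\to G_n$. If $1\le i\le m-1$ then $\Phi_m\Gamma^\alpha_i=\varepsilon_1\Phi_{m-1}$ as maps $G_{n-1}\to G_n$, for $\alpha=\pm$.
   Context: A cubical $\omega$-category with connections $G$ consists of sets $G_n$ ($n\ge0$), face maps $\partial^\alpha_i:G_n\to G_{n-1}$, degeneracies $\varepsilon_i:G_{n-1}\to G_n$, connections $\Gamma^\alpha_i:G_n\to G_{n+1}$ ($1\le i\le n$, $\alpha=\pm$) and partial compositions $\circ_j$ on $G_n$ ($1\le j\le n$, $a\circ_jb$ defined iff $\partial^+_ja=\partial^-_jb$) satisfying: $\partial^\alpha_i\partial^\beta_j=\partial^\beta_{j-1}\partial^\alpha_i$ ($i<j$), $\varepsilon_i\varepsilon_j=\varepsilon_{j+1}\varepsilon_i$ ($i\le j$), $\partial^\alpha_i\varepsilon_j=\varepsilon_{j-1}\partial^\alpha_i$ ($i<j$), $\varepsilon_j\partial^\alpha_{i-1}$ ($i>j$), $\mathrm{id}$ ($i=j$); $\Gamma^\alpha_i\Gamma^\beta_j=\Gamma^\beta_{j+1}\Gamma^\alpha_i$ ($i<j$), $\Gamma^\alpha_i\Gamma^\alpha_i=\Gamma^\alpha_{i+1}\Gamma^\alpha_i$, $\Gamma^\alpha_i\varepsilon_j=\varepsilon_{j+1}\Gamma^\alpha_i$ ($i<j$), $\varepsilon_j\Gamma^\alpha_{i-1}$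 ($i>j$), $\Gamma^\alpha_j\varepsilon_j=\varepsilon_{j+1}\varepsilon_j$, $\partial^\alpha_i\Gamma^\beta_j=\Gamma^\beta_{j-1}\partial^\alpha_i$ ($i<j$), $\Gamma^\beta_j\partial^\alpha_{i-1}$ ($i>j+1$), $\partial^\alpha_j\Gamma^\alpha_j=\partial^\alpha_{j+1}\Gamma^\alpha_j=\mathrm{id}$, $\partial^\alpha_j\Gamma^{-\alpha}_j=\partial^\alpha_{j+1}\Gamma^{-\alpha}_j=\varepsilon_j\partial^\alpha_j$; $\partial^-_j(a\circ_jb)=\partial^-_ja$, $\partial^+_j(a\circ_jb)=\partial^+_jb$, $\partial^\alpha_i(a\circ_jb)=\partial^\alpha_ia\circ_{j-1}\partial^\alpha_ib$ ($i<j$), $\partial^\alpha_ia\circ_j\partial^\alpha_ib$ ($i>j$); interchange for $i\ne j$; $\varepsilon_i(a\circ_jb)=\varepsilon_ia\circ_{j+1}\varepsilon_ib$ ($i\le j$), $\varepsilon_ia\circ_j\varepsilon_ib$ ($i>j$); $\Gamma^\alpha_i(a\circ_jb)=\Gamma^\alpha_ia\circ_{j+1}\Gamma^\alpha_ib$ ($i<j$), $\Gamma^\alpha_ia\circ_j\Gamma^\alpha_ib$ ($i>j$); $\Gamma^+_j(a\circ_jb)=(\Gamma^+_ja\circ_j\varepsilon_ja)\circ_{j+1}(\varepsilon_{j+1}a\circ_j\Gamma^+_jb)$, $\Gamma^-_j(a\circ_jb)=(\Gamma^-_ja\circ_j\varepsilon_{j+1}b)\circ_{j+1}(\varepsilon_jb\circ_j\Gamma^-_jb)$;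 each $\circ_j$ is a category structure with identities $\varepsilon_jy$; $\Gamma^+_ix\circ_i\Gamma^-_ix=\varepsilon_{i+1}x$, $\Gamma^+_ix\circ_{i+1}\Gamma^-_ix=\varepsilon_ix$. Folding operations on $G_k$: $\psi_ix=\Gamma^+_i\partial^-_{i+1}x\circ_{i+1}x\circ_{i+1}\Gamma^-_i\partial^+_{i+1}x$ ($1\le i\le k-1$), $\Psi_r=\psi_{r-1}\cdots\psi_1$ ($1\le r\le k$), $\Phi_m=\Psi_1\Psi_2\cdots\Psi_m$ ($0\le m\le k$). *)

From Stdlib Require Import Arith.

(* Sign convention: alpha = true is "+", alpha = false is "-". *)

(* Indexing conventions (chosen so that all maps are well-typed without casts):
   - cf a i n   : G (S n) -> G n          is  d^a_i on G_{n+1}, valid for 1 <= i <= n+1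
   - ce i n     : G n -> G (S n)          is  eps_i : G_n -> G_{n+1}, valid for 1 <= i <= n+1
   - cg a i n   : G n -> G (S n)          is  Gamma^a_i on G_n, valid for 1 <= i <= n
   - cc j n     : G (S n) -> G (S n) -> G (S n)  is  o_j on G_{n+1}, valid for 1 <= j <= n+1;
     the partial composition is modelled as a total function whose value is only
     constrained when the arguments are composable (cc j n x y is junk otherwise). *)
Record cub_omega_cat := {
  cG :> nat -> Type;
  cf : bool -> nat -> forall n, cG (S n) -> cG n;
  ce : nat -> forall n, cG n -> cG (S n);
  cg : bool -> nat -> forall n, cG n -> cG (S n);
  cc : nat -> forall n, cG (S n) -> cG (S n) -> cG (S n);

  ax_ff : forall a b i j n (x : cG (S (S n))), 1 <= i -> i < j -> j <= S (S n) ->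
    cf a i n (cf b j (S n) x) = cf b (j - 1) n (cf a i (S n) x);
  ax_ee : forall i j n (x : cG n), 1 <= i -> i <= j -> j <= S n ->
    ce i (S n) (ce j n x) = ce (S j) (S n) (ce i n x);
  ax_fe_lt : forall a i j n (x : cG (S n)), 1 <= i -> i < j -> j <= S (S n) ->
    cf a i (S n) (ce j (S n) x) = ce (j - 1) n (cf a i n x);
  ax_fe_gt : forall a i j n (x : cG (S n)), 1 <= j -> j < i -> i <= S (S n) ->
    cf a i (S n) (ce j (S n) x) = ce j n (cf a (i - 1) n x);
  ax_fe_eq : forall a i n (x : cG n), 1 <= i -> i <= S n ->
    cf a i n (ce i n x) = x;
  ax_gg_lt : forall a b i j n (x : cG n), 1 <= i -> i < j -> j <= n ->
    cg a i (S n) (cg b j n x) = cg b (S j) (S n) (cg a i n x);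
  ax_gg_eq : forall a i n (x : cG n), 1 <= i -> i <= n ->
    cg a i (S n) (cg a i n x) = cg a (S i) (S n) (cg a i n x);
  ax_ge_lt : forall a i j n (x : cG n), 1 <= i -> i < j -> j <= S n ->
    cg a i (S n) (ce j n x) = ce (S j) (S n) (cg a i n x);
  ax_ge_gt : forall a i j n (x : cG n), 1 <= j -> j < i -> i <= S n ->
    cg a i (S n) (ce j n x) = ce j (S n) (cg a (i - 1) n x);
  ax_ge_eq : forall a j n (x : cG n), 1 <= j -> j <= S n ->
    cg a j (S n) (ce j n x) = ce (S j) (S n) (ce j n x);
  ax_fg_lt : forall a b i j n (x : cG (S n)), 1 <= i -> i < j -> j <= S n ->
    cf a i (S n) (cg b j (S n) x) = cg b (j - 1) n (cf a i n x);
  ax_fg_gt : forall a b i j n (x : cG (S n)), 1 <= j -> S j < i -> i <= S (S n) ->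
    cf a i (S n) (cg b j (S n) x) = cg b j n (cf a (i - 1) n x);
  ax_fg_same1 : forall a j n (x : cG n), 1 <= j -> j <= n ->
    cf a j n (cg a j n x) = x;
  ax_fg_same2 : forall a j n (x : cG n), 1 <= j -> j <= n ->
    cf a (S j) n (cg a j n x) = x;
  ax_fg_opp1 : forall a j n (x : cG (S n)), 1 <= j -> j <= S n ->
    cf a j (S n) (cg (negb a) j (S n) x) = ce j n (cf a j n x);
  ax_fg_opp2 : forall a j n (x : cG (S n)), 1 <= j -> j <= S n ->
    cf a (S j) (S n) (cg (negb a) j (S n) x) = ce j n (cf a j n x);
  ax_fc_minus : forall j n (x y : cG (S n)), 1 <= j -> j <= S n ->
    cf true j n x = cf false j n y -> cf false j n (cc j n x y) = cf false j n x;
  ax_fc_plus : forall j n (x y : cG (S n)), 1 <= j -> j <= S n ->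
    cf true j n x = cf false j n y -> cf true j n (cc j n x y) = cf true j n y;
  ax_fc_lt : forall a i j n (x y : cG (S (S n))), 1 <= i -> i < j -> j <= S (S n) ->
    cf true j (S n) x = cf false j (S n) y ->
    cf a i (S n) (cc j (S n) x y) = cc (j - 1) n (cf a i (S n) x) (cf a i (S n) y);
  ax_fc_gt : forall a i j n (x y : cG (S (S n))), 1 <= j -> j < i -> i <= S (S n) ->
    cf true j (S n) x = cf false j (S n) y ->
    cf a i (S n) (cc j (S n) x y) = cc j n (cf a i (S n) x) (cf a i (S n) y);
  ax_interchange : forall i j n (x y z w : cG (S n)),
    1 <= i -> i <= S n -> 1 <= j -> j <= S n -> i <> j ->
    cf true i n x = cf false i n y -> cf true i n z = cf false i n w ->
    cf true j n x = cf false j n z -> cf true j n y = cf false j n w ->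
    cc j n (cc i n x y) (cc i n z w) = cc i n (cc j n x z) (cc j n y w);
  ax_ec_le : forall i j n (x y : cG (S n)), 1 <= i -> i <= j -> j <= S n ->
    cf true j n x = cf false j n y ->
    ce i (S n) (cc j n x y) = cc (S j) (S n) (ce i (S n) x) (ce i (S n) y);
  ax_ec_gt : forall i j n (x y : cG (S n)), 1 <= j -> j < i -> i <= S (S n) ->
    cf true j n x = cf false j n y ->
    ce i (S n) (cc j n x y) = cc j (S n) (ce i (S n) x) (ce i (S n) y);
  ax_gc_lt : forall a i j n (x y : cG (S n)), 1 <= i -> i < j -> j <= S n ->
    cf true j n x = cf false j n y ->
    cg a i (S n) (cc j n x y) = cc (S j) (S n) (cg a i (S n) x) (cg a i (S n) y);
  ax_gc_gt : forall a i j n (x y : cG (S n)), 1 <= j -> j < i -> i <= S n ->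
    cf true j n x = cf false j n y ->
    cg a i (S n) (cc j n x y) = cc j (S n) (cg a i (S n) x) (cg a i (S n) y);
  ax_gc_plus : forall j n (x y : cG (S n)), 1 <= j -> j <= S n ->
    cf true j n x = cf false j n y ->
    cg true j (S n) (cc j n x y) =
      cc (S j) (S n) (cc j (S n) (cg true j (S n) x) (ce j (S n) x))
                     (cc j (S n) (ce (S j) (S n) x) (cg true j (S n) y));
  ax_gc_minus : forall j n (x y : cG (S n)), 1 <= j -> j <= S n ->
    cf true j n x = cf false j n y ->
    cg false j (S n) (cc j n x y) =
      cc (S j) (S n) (cc j (S n) (cg false j (S n) x) (ce (S j) (S n) y))
                     (cc j (S n) (ce j (S n) y) (cg false j (S n) y));
  ax_assoc : forall j n (x y z : cG (S n)), 1 <= j -> j <= S n ->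
    cf true j n x = cf false j n y -> cf true j n y = cf false j n z ->
    cc j n (cc j n x y) z = cc j n x (cc j n y z);
  ax_idl : forall j n (x : cG (S n)), 1 <= j -> j <= S n ->
    cc j n (ce j n (cf false j n x)) x = x;
  ax_idr : forall j n (x : cG (S n)), 1 <= j -> j <= S n ->
    cc j n x (ce j n (cf true j n x)) = x;
  ax_gg_comp1 : forall i n (x : cG (S n)), 1 <= i -> i <= S n ->
    cc i (S n) (cg true i (S n) x) (cg false i (S n) x) = ce (S i) (S n) x;
  ax_gg_comp2 : forall i n (x : cG (S n)), 1 <= i -> i <= S n ->
    cc (S i) (S n) (cg true i (S n) x) (cg false i (S n) x) = ce i (S n) x
}.

Arguments cf {c} a i n _.
Arguments ce {c} i n _.
Arguments cg {c} a i n _.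
Arguments cc {c} j n _ _.

Section Folding.
Variable G : cub_omega_cat.

(* psi_i x = Gamma^+_i d^-_{i+1} x o_{i+1} x o_{i+1} Gamma^-_i d^+_{i+1} x
   on G_k (meaningful for 1 <= i <= k-1, so k >= 2); identity on G_0, G_1. *)
Definition psi (i : nat) (k : nat) : G k -> G k :=
  match k as k0 return G k0 -> G k0 with
  | S (S n) => fun x =>
      cc (S i) (S n)
         (cc (S i) (S n) (cg true i (S n) (cf false (S i) (S n) x)) x)
         (cg false i (S n) (cf true (S i) (S n) x))
  | _ => fun x => x
  end.

Fixpoint psi_comp (r : nat) (k : nat) (x : G k) : G k :=
  match r with
  | O => x
  | S r' => psi r k (psi_comp r' k x)
  end.

Definition Psi (r : nat) (k : nat) (x : G k) : G k := psi_comp (r - 1) k x.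

Fixpoint Phi (m : nat) (k : nat) (x : G k) : G k :=
  match m with
  | O => x
  | S m' => Phi m' k (Psi (S m') k x)
  end.
End Folding.

Arguments psi {G} i k _.
Arguments Psi {G} r k _.
Arguments Phi {G} m k _.

(* Each folding map [ψ_i] commutes with the degeneracies and connections in
   directions other than [i], [i+1], and collapses those in its own directions:
   [ψ_i ε_i = ψ_i ε_(i+1) = ε_i] and [ψ_i Γ^α_i = ε_i].  The one non-formal identity
   is [ψ_(i+1) ψ_i Γ^α_(i+1) = Γ^(-α)_i ψ_i], a two-dimensional computation with the
   interchange law; it suffices to do it for [α = +], since reversing all signs and
   compositions gives again a cubical ω-category with connections, with the same
   [ψ_i].  Consequently [Ψ_r = ψ_(r-1) ⋯ ψ_1] moves [ε_j] ([j ≤ r]) past itself as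
   [ε_(max 1 (j-1))] and [Γ^α_j] ([j < r]) as [ε_1] or [Γ^(-α)_(j-1)], turning [Ψ_r]
   into [Ψ_(r-1)]; by induction on [m], [Φ_m = Φ_(m-1) Ψ_m] thus turns [ε_i] and
   [Γ^α_i] into [ε_1]. *)

From Stdlib Require Import Arith Lia.

Notation "∂[ a , i ] x" := (cf a i _ x)
  (at level 10, a, i at level 200, x at level 9, format "∂[ a ,  i ]  x").
Notation "ε[ i ] x" := (ce i _ x)
  (at level 10, i at level 200, x at level 9, format "ε[ i ]  x").
Notation "Γ[ a , i ] x" := (cg a i _ x)
  (at level 10, a, i at level 200, x at level 9, format "Γ[ a ,  i ]  x").
Notation "x ∘[ j ] y" := (cc j _ x y)
  (at level 40, j at level 200, left associativity, format "x  ∘[ j ]  y").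

Section AxiomsShifted.
Variable G : cub_omega_cat.

Lemma cf_ceS a i j n (x : G (S n)) : 1 <= i -> i <= j -> j <= S n ->
  ∂[a, i] (ε[S j] x) = ε[j] (∂[a, i] x).
Proof. intros; now rewrite ax_fe_lt, Nat.sub_succ, Nat.sub_0_r by lia. Qed.

Lemma cfS_ce a i j n (x : G (S n)) : 1 <= j -> j <= i -> i <= S n ->
  ∂[a, S i] (ε[j] x) = ε[j] (∂[a, i] x).
Proof. intros; now rewrite ax_fe_gt, Nat.sub_succ, Nat.sub_0_r by lia. Qed.

Lemma cgS_ce a i j n (x : G n) : 1 <= j -> j <= i -> i <= n ->
  Γ[a, S i] (ε[j] x) = ε[j] (Γ[a, i] x).
Proof. intros; now rewrite ax_ge_gt, Nat.sub_succ, Nat.sub_0_r by lia. Qed.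

Lemma cf_cgS a b i j n (x : G (S n)) : 1 <= i -> i <= j -> j <= n ->
  ∂[a, i] (Γ[b, S j] x) = Γ[b, j] (∂[a, i] x).
Proof. intros; now rewrite ax_fg_lt, Nat.sub_succ, Nat.sub_0_r by lia. Qed.

Lemma cfS_cg a b i j n (x : G (S n)) : 1 <= j -> j < i -> i <= S n ->
  ∂[a, S i] (Γ[b, j] x) = Γ[b, j] (∂[a, i] x).
Proof. intros; now rewrite ax_fg_gt, Nat.sub_succ, Nat.sub_0_r by lia. Qed.

Lemma cf_ccS a i j n (x y : G (S (S n))) : 1 <= i -> i <= j -> j <= S n ->
  ∂[true, S j] x = ∂[false, S j] y ->
  ∂[a, i] (x ∘[S j] y) = ∂[a, i] x ∘[j] ∂[a, i] y.
Proof. intros; now rewrite ax_fc_lt, Nat.sub_succ, Nat.sub_0_r by (auto || lia). Qed.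

Lemma cf_cg_opp a b j n (x : G (S n)) : a <> b -> 1 <= j -> j <= S n ->
  ∂[a, j] (Γ[b, j] x) = ε[j] (∂[a, j] x).
Proof.
  intros; replace b with (negb a) by (destruct a, b; cbn; congruence).
  apply ax_fg_opp1; lia.
Qed.

Lemma cfS_cg_opp a b j n (x : G (S n)) : a <> b -> 1 <= j -> j <= S n ->
  ∂[a, S j] (Γ[b, j] x) = ε[j] (∂[a, j] x).
Proof.
  intros; replace b with (negb a) by (destruct a, b; cbn; congruence).
  apply ax_fg_opp2; lia.
Qed.

Lemma cc_ce_l j n (x : G (S n)) y : 1 <= j -> j <= S n -> y = ∂[false, j] x ->
  ε[j] y ∘[j] x = x.
Proof. intros; subst; apply ax_idl; lia. Qed.

Lemma cc_ce_r j n (x : G (S n)) y : 1 <= j -> j <= S n -> y = ∂[true, j] x ->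
  x ∘[j] ε[j] y = x.
Proof. intros; subst; apply ax_idr; lia. Qed.

End AxiomsShifted.

Ltac cube_simpl :=
  repeat first
   [ rewrite ax_fe_eq by lia
   | rewrite cf_ceS by lia
   | rewrite cfS_ce by lia
   | rewrite ax_fg_same1 by lia
   | rewrite ax_fg_same2 by lia
   | rewrite cf_cg_opp by (lia || discriminate)
   | rewrite cfS_cg_opp by (lia || discriminate)
   | rewrite cf_cgS by lia
   | rewrite cfS_cg by lia
   | rewrite ax_fc_minus by cube_side
   | rewrite ax_fc_plus by cube_side
   | rewrite cf_ccS by cube_side
   | rewrite ax_fc_gt by cube_side
   | rewrite cc_ce_l by cube_side
   | rewrite cc_ce_r by cube_side
   | rewrite ax_gg_comp2 by lia ]
with cube_side := first [lia | cube_simpl; reflexivity].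

Section Folding.
Variable G : cub_omega_cat.

Lemma psi_SS i n (x : G (S (S n))) :
  psi i (S (S n)) x =
  (Γ[true, i] (∂[false, S i] x) ∘[S i] x) ∘[S i] Γ[false, i] (∂[true, S i] x).
Proof. reflexivity. Qed.

Lemma psiS_ce i j k (x : G k) : 1 <= j -> j <= i -> S i <= k ->
  psi (S i) (S k) (ε[j] x) = ε[j] (psi i k x).
Proof.
  intros; destruct k as [|[|n]]; try lia.
  rewrite !psi_SS; cube_simpl; rewrite !cgS_ce by lia.
  now rewrite <- !ax_ec_le by cube_side.
Qed.

Lemma psi_ce i k (x : G k) : 1 <= i -> i <= k ->
  psi i (S k) (ε[i] x) = ε[i] x.
Proof.
  intros; destruct k as [|n]; try lia.
  rewrite psi_SS; cube_simpl; rewrite !ax_ge_eq by lia; now cube_simpl.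
Qed.

Lemma psi_ceS i k (x : G k) : 1 <= i -> i <= k ->
  psi i (S k) (ε[S i] x) = ε[i] x.
Proof. intros; destruct k as [|n]; try lia; rewrite psi_SS; now cube_simpl. Qed.

Lemma psi_ce_gt i j k (x : G k) : 1 <= i -> S i < j -> j <= S k ->
  psi i (S k) (ε[j] x) = ε[j] (psi i k x).
Proof.
  intros; destruct k as [|[|n]], j as [|[|j]]; try lia.
  rewrite !psi_SS; cube_simpl; rewrite !ax_ge_lt by lia.
  now rewrite <- !ax_ec_gt by cube_side.
Qed.

Lemma psi_cg a i k (x : G k) : 1 <= i -> i <= k ->
  psi i (S k) (Γ[a, i] x) = ε[i] x.
Proof.
  intros; destruct k as [|n]; try lia.
  rewrite psi_SS; destruct a; cube_simpl; rewrite ?ax_ge_eq by lia; now cube_simpl.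
Qed.

Lemma psi_cg_gt a i j k (x : G k) : 1 <= i -> S i < j -> j <= k ->
  psi i (S k) (Γ[a, j] x) = Γ[a, j] (psi i k x).
Proof.
  intros; destruct k as [|[|n]], j as [|[|j]]; try lia.
  rewrite !psi_SS; cube_simpl; rewrite !(ax_gg_lt G _ a i) by lia.
  now rewrite <- !ax_gc_gt by cube_side.
Qed.

Lemma psiS_cg a i j k (x : G k) : 1 <= j -> j < i -> S i <= k ->
  psi (S i) (S k) (Γ[a, j] x) = Γ[a, j] (psi i k x).
Proof.
  intros; destruct k as [|[|n]]; try lia.
  rewrite !psi_SS; cube_simpl; rewrite <- !(ax_gg_lt G a _ j i) by lia.
  now rewrite <- !ax_gc_lt by cube_side.
Qed.

End Folding.

Section ConnectionFold.
Variable G : cub_omega_cat.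
Variables (i q : nat) (X : G (S (S q))).
Hypotheses (Hi : 1 <= i) (HiX : i <= S q).

Local Notation A := (Γ[true, i] (∂[false, S i] X)).
Local Notation C := (Γ[false, i] (∂[true, S i] X)).
Local Notation D := (X ∘[S i] C).
Local Notation Z := (Γ[true, S i] X ∘[S i] Γ[false, i] X).

Lemma psi_cgS_true :
  psi i (S (S (S q))) (Γ[true, S i] X) = ε[S (S i)] A ∘[S i] Z.
Proof.
  rewrite psi_SS; cube_simpl; rewrite ax_ge_lt by lia.
  now rewrite ax_assoc by cube_side.
Qed.

Lemma cc_cg_false_fold : Z ∘[S (S i)] Γ[false, S i] D = Γ[false, i] D.
Proof.
  rewrite ax_gc_minus by cube_side.
  rewrite <- ax_assoc by cube_side.
  rewrite (ax_interchange G (S i) (S (S i))) by cube_side.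
  rewrite ax_gg_comp2 by lia; cube_simpl.
  rewrite <- ax_gg_eq by lia.
  now rewrite <- ax_gc_lt by cube_side.
Qed.

Lemma psiS_psi_cgS_true :
  psi (S i) (S (S (S q))) (psi i (S (S (S q))) (Γ[true, S i] X)) =
  Γ[false, i] (psi i (S (S q)) X).
Proof.
  rewrite psi_cgS_true, !psi_SS; cube_simpl; rewrite cgS_ce by lia.
  rewrite (ax_assoc G (S i) _ A X) by cube_side.
  rewrite ax_gc_minus by cube_side.
  assert (cancel :
    (ε[S (S i)] A ∘[S i] Z) ∘[S (S i)] (Γ[false, S i] A ∘[S i] ε[S (S i)] D) =
    Γ[false, S i] A ∘[S i] Z).
  { rewrite (ax_interchange G (S i) (S (S i))) by cube_side; now cube_simpl. }
  rewrite ax_assoc, <- (ax_assoc G (S (S i)) _ (ε[S (S i)] A ∘[S i] Z)), cancel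
    by cube_side.
  rewrite (ax_interchange G (S i) (S (S i)) _ (Γ[false, S i] A)), cc_cg_false_fold
    by cube_side.
  (* Split [ε[i] A] as [Γ[true, i] A ∘[S i] Γ[false, i] A]; since [A] is itself a
     [Γ[true, i]], [Γ[true, i] A = Γ[true, S i] A] then cancels against
     [Γ[false, S i] A]. *)
  rewrite <- (ax_gg_comp2 G i _ A) by lia.
  rewrite (ax_interchange G (S i) (S (S i))) by cube_side.
  rewrite ax_gg_eq, <- ax_assoc, ax_gg_comp2 by cube_side.
  rewrite <- ax_ec_le, <- ax_gc_lt by cube_side.
  now cube_simpl.
Qed.
End ConnectionFold.

(* Reversing the compositions exchanges [ax_fc_minus]/[ax_fc_plus],
   [ax_gc_minus]/[ax_gc_plus] and [ax_idl]/[ax_idr] and reads [ax_assoc] backwards;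
   the other axioms are self-dual. *)
Definition rev_cat (G : cub_omega_cat) : cub_omega_cat.
Proof.
  refine {| cG := G; cf a := cf (negb a); ce := ce; cg a := cg (negb a);
            cc j n x y := cc j n y x |}; intros; cbn in *.
  all: first
    [ now apply ax_ff | now apply ax_ee | now apply ax_fe_lt | now apply ax_fe_gt
    | now apply ax_fe_eq | now apply ax_gg_lt | now apply ax_gg_eq
    | now apply ax_ge_lt | now apply ax_ge_gt | now apply ax_ge_eq
    | now apply ax_fg_lt | now apply ax_fg_gt | now apply ax_fg_same1
    | now apply ax_fg_same2 | now apply ax_fg_opp1 | now apply ax_fg_opp2
    | now apply ax_fc_plus | now apply ax_fc_minus | now apply ax_fc_lt
    | now apply ax_fc_gt | now apply ax_interchange | now apply ax_ec_le
    | now apply ax_ec_gt | now apply ax_gc_lt | now apply ax_gc_gt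
    | now apply ax_gc_minus | now apply ax_gc_plus | now symmetry; apply ax_assoc
    | now apply ax_idr | now apply ax_idl | now apply ax_gg_comp1
    | now apply ax_gg_comp2 ].
Defined.

Lemma psi_rev (G : cub_omega_cat) i k (x : G k) : 1 <= i -> S i <= k ->
  @psi (rev_cat G) i k x = psi i k x.
Proof.
  intros; destruct k as [|[|n]]; try lia.
  cbn [psi rev_cat cG cf cg cc negb].
  symmetry; apply ax_assoc; cube_simpl; reflexivity || lia.
Qed.

Lemma psiS_psi_cgS (G : cub_omega_cat) a i k (x : G k) : 1 <= i -> S i <= k ->
  psi (S i) (S k) (psi i (S k) (Γ[a, S i] x)) = Γ[negb a, i] (psi i k x).
Proof.
  intros; destruct k as [|[|q]]; try lia.
  destruct a.
  - apply psiS_psi_cgS_true; lia.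
  - assert (Hrev := psiS_psi_cgS_true (rev_cat G) i q x ltac:(lia) ltac:(lia)).
    rewrite !psi_rev in Hrev by lia; exact Hrev.
Qed.

Section Iteration.
Variable G : cub_omega_cat.

Lemma psi_comp_S r k (x : G k) :
  psi_comp G (S r) k x = psi (S r) k (psi_comp G r k x).
Proof. reflexivity. Qed.

Lemma psi_comp_ce_gt l j k (x : G k) : l + 2 <= j -> j <= S k ->
  psi_comp G l (S k) (ε[j] x) = ε[j] (psi_comp G l k x).
Proof.
  induction l; intros; [reflexivity|].
  rewrite !psi_comp_S, IHl by lia; apply psi_ce_gt; lia.
Qed.

Lemma psi_comp_cg_gt a l j k (x : G k) : l + 2 <= j -> j <= k ->
  psi_comp G l (S k) (Γ[a, j] x) = Γ[a, j] (psi_comp G l k x).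
Proof.
  induction l; intros; [reflexivity|].
  rewrite !psi_comp_S, IHl by lia; apply psi_cg_gt; lia.
Qed.

Lemma psi_compS_ce1 r k (x : G k) : r < k ->
  psi_comp G (S r) (S k) (ε[1] x) = ε[1] (psi_comp G r k x).
Proof.
  induction r; intros.
  - apply psi_ce; lia.
  - rewrite psi_comp_S, IHr by lia; apply psiS_ce; lia.
Qed.

Lemma psi_compS_ceSS j r k (x : G k) : j <= r -> r < k ->
  psi_comp G (S r) (S k) (ε[S (S j)] x) = ε[S j] (psi_comp G r k x).
Proof.
  induction 1; intros.
  - rewrite psi_comp_S, psi_comp_ce_gt by lia; apply psi_ceS; lia.
  - rewrite psi_comp_S, IHle by lia; apply psiS_ce; lia.
Qed.

Lemma psi_compS_cg1 a r k (x : G k) : r < k ->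
  psi_comp G (S r) (S k) (Γ[a, 1] x) = ε[1] (psi_comp G r k x).
Proof.
  induction r; intros.
  - apply psi_cg; lia.
  - rewrite psi_comp_S, IHr by lia; apply psiS_ce; lia.
Qed.

Lemma psi_compSS_cgSS a j r k (x : G k) : j <= r -> S (S r) <= k ->
  psi_comp G (S (S r)) (S k) (Γ[a, S (S j)] x) =
  Γ[negb a, S j] (psi_comp G (S r) k x).
Proof.
  induction 1; intros.
  - rewrite !psi_comp_S, psi_comp_cg_gt by lia; apply psiS_psi_cgS; lia.
  - rewrite psi_comp_S, IHle by lia; apply psiS_cg; lia.
Qed.

Lemma Phi_succ m k (x : G k) : Phi (S m) k x = Phi m k (psi_comp G m k x).
Proof. cbn [Phi]; unfold Psi; now rewrite Nat.sub_succ, Nat.sub_0_r. Qed.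

Lemma Phi_ce m i k (x : G k) : 1 <= i -> i <= S m -> m <= k ->
  Phi (S m) (S k) (ε[i] x) = ε[1] (Phi m k x).
Proof.
  revert i x; induction m; intros i x **; rewrite Phi_succ.
  - now replace i with 1 by lia.
  - destruct i as [|[|j]]; [lia| |].
    + now rewrite psi_compS_ce1, IHm, (Phi_succ m) by lia.
    + now rewrite psi_compS_ceSS, IHm, (Phi_succ m) by lia.
Qed.

Lemma Phi_cg m a i k (x : G k) : 1 <= i -> i <= m -> m <= k ->
  Phi (S m) (S k) (Γ[a, i] x) = ε[1] (Phi m k x).
Proof.
  revert a i x; induction m; intros a i x **; [lia|]; rewrite Phi_succ.
  destruct i as [|[|j]]; [lia| |].
  - now rewrite psi_compS_cg1, Phi_ce, (Phi_succ m) by lia.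
  - destruct m as [|r]; [lia|].
    now rewrite psi_compSS_cgSS, IHm, (Phi_succ (S r)) by lia.
Qed.

End Iteration.

(* n is written as k+1, so that G_{n-1} = G k and G_n = G (S k). *)
Theorem theorem5p6 (G : cub_omega_cat) (m k : nat) :
  1 <= m -> m <= S k ->
  (forall i, 1 <= i -> i <= m -> forall x : G k,
      Phi m (S k) (ce i k x) = ce 1 k (Phi (m - 1) k x)) /\
  (forall (a : bool) i, 1 <= i -> i <= m - 1 -> forall x : G k,
      Phi m (S k) (cg a i k x) = ce 1 k (Phi (m - 1) k x)).
Proof.
  intros Hm Hk; destruct m as [|m]; [lia|].
  rewrite Nat.sub_succ, Nat.sub_0_r.
  split; intros; [apply Phi_ce | apply Phi_cg]; lia.
Qed.
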